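(* Let $(G,k)$ be a connected quadratic Lie group with Lie algebra $\mathcal G$, and let $\langle x,y\rangle=k(u(x),y)$ be a flat left invariant semi-Riemannian metric on $G$, where $u$ is a $k$-symmetric linear isomorphism of $\mathcal G$. Let $L_x:y\mapsto xy$ denote left multiplication for the Levi-Civita product. Then $L_e^2=0$ for every $e\in\mathcal Z(\mathcal G)$. If moreover $\langle\,,\,\rangle$ is Riemannian or Lorentzian, then $L_e=0$ for every $e\in\mathcal Z(\mathcal G)$, and $u(\mathcal Z(\mathcal G))\subset\mathcal Z(\mathcal G)$.
   Context: A quadratic Lie group is a Lie group $G$ with a bi-invariant semi-Riemannian metric $k$; equivalently $k$ is a nondegenerate symmetric bilinear form on $\mathcal G$ with each $\mathrm{ad}_x$ $k$-skew-symmetric. The Levi-Civita product of a left invariant metric is the bilinear product on $\mathcal G$ defined by $(xy)^+=\nabla_{x^+}y^+$, where $x^+$ is the left invariant vector field with value $x$ at the unit and $\nabla$ the Levi-Civita connection; it is determined by the Koszul formula $2\langle xy,z\rangle=\langle[x,y],z\rangle-\langle[y,z],x\rangle+\langle[z,x],y\rangle$. $\mathcal Z(\mathcal G)$ is the center of $\mathcal G$. *)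

(* The Lie algebra is modelled as R^n = 'rV[R]_n over a real
   closed field R (generalising the reals). *)
From HB Require Import structures.
From mathcomp Require Import all_boot all_order all_algebra.
Set Implicit Arguments. Unset Strict Implicit. Unset Printing Implicit Defensive.
Import Order.TTheory GRing.Theory Num.Theory.
Local Open Scope ring_scope.

Section Defs.
Variables (R : rcfType) (n : nat).
Notation V := 'rV[R]_n.

Definition bform (M : 'M[R]_n) (x y : V) : R := (x *m M *m y^T) 0 0.

Definition lie_bracket (br : V -> V -> V) : Prop :=
  (forall a x y z, br (a *: x + y) z = a *: br x z + br y z) /\
  (forall a x y z, br x (a *: y + z) = a *: br x y + br x z) /\
  (forall x, br x x = 0) /\
  (forall x y z, br x (br y z) + br y (br z x) + br z (br x y) = 0).

Definition quadratic (br : V -> V -> V) (K : 'M[R]_n) : Prop :=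
  lie_bracket br /\ K^T = K /\ K \in unitmx /\
  (forall x y z, bform K (br x y) z = - bform K y (br x z)).

Definition k_symmetric (K U : 'M[R]_n) : Prop :=
  forall x y, bform K (x *m U) y = bform K x (y *m U).

(* Levi-Civita product of the left invariant metric g, via the Koszul formula *)
Definition levi_civita (br : V -> V -> V) (g : V -> V -> R) (p : V -> V -> V) :=
  forall x y z, 2 * g (p x y) z = g (br x y) z - g (br y z) x + g (br z x) y.

Definition flat (br : V -> V -> V) (p : V -> V -> V) : Prop :=
  forall x y z, p x (p y z) - p y (p x z) - p (br x y) z = 0.

Definition central (br : V -> V -> V) (e : V) : Prop := forall x, br e x = 0.

Definition riemannian (M : 'M[R]_n) : Prop :=
  forall x : V, x != 0 -> 0 < bform M x x.

(* Lorentzian: nondegenerate of index 1 (Sylvester diagonalisation with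
   exactly one negative diagonal entry) *)
Definition lorentzian (M : 'M[R]_n) : Prop :=
  exists (P : 'M[R]_n) (d : 'rV[R]_n),
    P \in unitmx /\ P *m M *m P^T = diag_mx d /\
    (forall i, d 0 i != 0) /\ #|[set i | d 0 i < 0]| = 1%N.
End Defs.

(* For a central element e the Koszul formula makes L_e skew for the metric
   and gives L_e e = 0 and L_e x = L_x e, so flatness evaluated at (e, x, e)
   yields L_e^2 = 0.  Hence the image of L_e is totally isotropic: in definite
   signature this forces L_e = 0, and in Lorentzian signature the image is at
   most a line, which together with skewness again gives L_e = 0.  Then the
   Koszul formula reduces to <[y,z], e> = k([y,z], u(e)) = 0, and a vector
   k-orthogonal to [G,G] is central by ad-invariance of k. *)
From HB Require Import structures.
From mathcomp Require Import all_boot all_order all_algebra.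
Import Order.TTheory GRing.Theory Num.Theory.
Set Implicit Arguments. Unset Strict Implicit.
Local Open Scope ring_scope.

Section BilinearForm.
Variables (R : rcfType) (n : nat).
Implicit Types (M : 'M[R]_n) (x y z : 'rV[R]_n).

Lemma bformDl M x y z : bform M (x + y) z = bform M x z + bform M y z.
Proof. by rewrite /bform !mulmxDl mxE. Qed.

Lemma bformZl M a x z : bform M (a *: x) z = a * bform M x z.
Proof. by rewrite /bform -!scalemxAl mxE. Qed.

Lemma bformNl M x z : bform M (- x) z = - bform M x z.
Proof. by rewrite -scaleN1r bformZl mulN1r. Qed.

Lemma bformBl M x y z : bform M (x - y) z = bform M x z - bform M y z.
Proof. by rewrite bformDl bformNl. Qed.

Lemma bform0l M z : bform M 0 z = 0.
Proof. by rewrite /bform !mul0mx mxE. Qed.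

Lemma bformDr M x y z : bform M z (x + y) = bform M z x + bform M z y.
Proof. by rewrite /bform linearD /= mulmxDr mxE. Qed.

Lemma bformZr M a x z : bform M z (a *: x) = a * bform M z x.
Proof. by rewrite /bform linearZ /= -scalemxAr mxE. Qed.

Lemma bformNr M x z : bform M z (- x) = - bform M z x.
Proof. by rewrite -scaleN1r bformZr mulN1r. Qed.

Lemma bformBr M x y z : bform M z (x - y) = bform M z x - bform M z y.
Proof. by rewrite bformDr bformNr. Qed.

Lemma bform0r M z : bform M z 0 = 0.
Proof. by rewrite /bform trmx0 mulmx0 mxE. Qed.

Lemma bform_trmx M x y : bform M^T x y = bform M y x.
Proof.
rewrite /bform; have -> : x *m M^T *m y^T = (y *m M *m x^T)^T.
  by rewrite !trmx_mul trmxK mulmxA.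
by rewrite mxE.
Qed.

Lemma bformC M x y : M^T = M -> bform M x y = bform M y x.
Proof. by move=> M_sym; rewrite -bform_trmx M_sym. Qed.

Lemma bform_delta M i j : bform M (delta_mx 0 i) (delta_mx 0 j) = M i j.
Proof. by rewrite /bform trmx_delta -rowE -colE !mxE. Qed.

Lemma bform_inj M N : (forall x y, bform M x y = bform N x y) -> M = N.
Proof. by move=> MN; apply/matrixP=> i j; rewrite -!bform_delta MN. Qed.

Lemma bform_mulmxl M N x y : bform (M *m N) x y = bform N (x *m M) y.
Proof. by rewrite /bform !mulmxA. Qed.

Lemma bform_nondeg M x : M \in unitmx -> (forall z, bform M x z = 0) -> x = 0.
Proof.
move=> M_unit x_orth; suff xM0 : x *m M = 0 by rewrite -(mulmxK M_unit x) xM0 mul0mx.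
apply/matrixP=> i j; rewrite (ord1 i) [RHS]mxE.
by have := x_orth (delta_mx 0 j); rewrite /bform trmx_delta -colE mxE.
Qed.

Lemma bform_diag_mx (d : 'rV[R]_n) x y :
  bform (diag_mx d) x y = \sum_i x 0 i * d 0 i * y 0 i.
Proof. by rewrite /bform mul_mx_diag mxE; apply: eq_bigr => i _; rewrite !mxE. Qed.

(* In a Sylvester frame [P] of a Lorentzian form, the negative direction is
   the coordinate [i0] of [x *m invmx P]. *)
Lemma lorentzian_frame M : lorentzian M ->
  exists P (d : 'rV[R]_n) (i0 : 'I_n), [/\ P \in unitmx,
    P *m M *m P^T = diag_mx d & forall i, i != i0 -> 0 < d 0 i].
Proof.
move=> [P [d [P_unit [PMP [d_neq0 card_neg]]]]].
have /cards1P [i0 neg_i0] : #|[set i | d 0 i < 0]| == 1%N by rewrite card_neg.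
exists P, d, i0; split=> // i i_neq_i0.
have : (i \in [set i | d 0 i < 0]) = (i \in [set i0]) by rewrite neg_i0.
by rewrite !inE (negbTE i_neq_i0) lt0r d_neq0 leNgt => ->.
Qed.

Lemma frame_isotropic_eq0 M P (d : 'rV[R]_n) i0 x :
  P \in unitmx -> P *m M *m P^T = diag_mx d ->
  (forall i, i != i0 -> 0 < d 0 i) -> (x *m invmx P) 0 i0 = 0 ->
  bform M x x = 0 -> x = 0.
Proof.
move=> P_unit PMP d_pos xi0 xx0.
set x' := x *m invmx P in xi0.
have x_def : x = x' *m P by rewrite /x' mulmxKV.
clearbody x'.
have sum0 : \sum_i x' 0 i * d 0 i * x' 0 i = 0.
  by rewrite -bform_diag_mx -PMP -xx0 /bform x_def trmx_mul !mulmxA.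
have term_ge0 i : true -> 0 <= x' 0 i * d 0 i * x' 0 i.
  move=> _; have [->|i_neq_i0] := eqVneq i i0; first by rewrite xi0 !mul0r.
  by rewrite mulrC mulrA -expr2 mulr_ge0 ?sqr_ge0 // ltW // d_pos.
have term0 := psumr_eq0P term_ge0 sum0.
suff x'0 : x' = 0 by rewrite x_def x'0 mul0mx.
apply/matrixP=> i j; rewrite (ord1 i) [RHS]mxE.
have [-> //|j_neq_i0] := eqVneq j i0.
move: (term0 j isT) => /eqP; rewrite !mulf_eq0 (gt_eqF (d_pos j j_neq_i0)) /=.
by rewrite orbF orbb => /eqP.
Qed.

Lemma lorentzian_isotropic_collinear M a b : lorentzian M ->
  bform M a a = 0 -> bform M b b = 0 -> bform M a b = 0 -> bform M b a = 0 ->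
  a = 0 \/ exists c, b = c *: a.
Proof.
move=> /lorentzian_frame [P [d [i0 [P_unit PMP d_pos]]]] aa0 bb0 ab0 ba0.
set a0 := (a *m invmx P) 0 i0; set b0 := (b *m invmx P) 0 i0.
have [a00|a0_neq0] := eqVneq a0 0.
  by left; apply: (frame_isotropic_eq0 P_unit PMP d_pos a00 aa0).
right; exists (b0 / a0).
set w := b0 *: a - a0 *: b.
have wi0 : (w *m invmx P) 0 i0 = 0.
  by rewrite /w mulmxBl -!scalemxAl /a0 /b0 !mxE mulrC subrr.
have ww0 : bform M w w = 0.
  rewrite /w !(bformBl, bformBr, bformZl, bformZr) aa0 bb0 ab0 ba0.
  by rewrite !mulr0 !subrr !mulr0 subrr.
move: (frame_isotropic_eq0 P_unit PMP d_pos wi0 ww0) => /eqP.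
rewrite subr_eq0 => /eqP w0.
by rewrite mulrC -scalerA w0 scalerA mulVf // scale1r.
Qed.

End BilinearForm.

Section LieBracket.
Variables (R : rcfType) (n : nat) (br : 'rV[R]_n -> 'rV[R]_n -> 'rV[R]_n).
Hypothesis br_lie : lie_bracket br.

Lemma lie_br0l z : br 0 z = 0.
Proof. by have := br_lie.1 (-1) z z z; rewrite !scaleN1r !addNr. Qed.

Lemma lie_br0r z : br z 0 = 0.
Proof. by have := br_lie.2.1 (-1) z z z; rewrite !scaleN1r !addNr. Qed.

Lemma lie_brC x y : br y x = - br x y.
Proof.
have brDl u v w : br (u + v) w = br u w + br v w.
  by have := br_lie.1 1 u v w; rewrite !scale1r.
have brDr u v w : br u (v + w) = br u v + br u w.
  by have := br_lie.2.1 1 u v w; rewrite !scale1r.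
apply/eqP; rewrite -addr_eq0; apply/eqP.
by have := br_lie.2.2.1 (x + y); rewrite !brDr !brDl !br_lie.2.2.1 add0r addr0 => ->.
Qed.

Lemma central_brl e z : central br e -> br z e = 0.
Proof. by move=> e_central; rewrite lie_brC e_central oppr0. Qed.

End LieBracket.

Lemma quadratic_orth_central (R : rcfType) (n : nat)
    (br : 'rV[R]_n -> 'rV[R]_n -> 'rV[R]_n) (K : 'M[R]_n) w : quadratic br K ->
  (forall y z, bform K (br y z) w = 0) -> central br w.
Proof.
move=> [br_lie [K_sym [K_unit K_inv]]] w_orth y; apply: (bform_nondeg K_unit) => z.
by rewrite (lie_brC br_lie y) bformNl K_inv opprK bformC // w_orth oppr0.
Qed.

Section LeviCivita.
Variables (R : rcfType) (n : nat).
Variables (br p : 'rV[R]_n -> 'rV[R]_n -> 'rV[R]_n) (G : 'M[R]_n).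
Hypotheses (br_lie : lie_bracket br) (G_sym : G^T = G) (G_unit : G \in unitmx).
Hypothesis p_lc : levi_civita br (bform G) p.
Local Notation g := (bform G).

Let two_neq0 : (2 : R) != 0. Proof. by rewrite pnatr_eq0. Qed.

Lemma lc_eq0 x y :
  (forall z, g (br x y) z - g (br y z) x + g (br z x) y = 0) -> p x y = 0.
Proof.
move=> koszul0; apply: (bform_nondeg G_unit) => z.
by have := p_lc x y z; rewrite koszul0 => /eqP; rewrite mulf_eq0 pnatr_eq0 => /eqP.
Qed.

Lemma lc0l y : p 0 y = 0.
Proof.
by apply: lc_eq0 => z; rewrite lie_br0l ?lie_br0r // !(bform0l, bform0r) subrr addr0.
Qed.

Lemma lc0r y : p y 0 = 0.
Proof.
by apply: lc_eq0 => z; rewrite lie_br0l ?lie_br0r // !(bform0l, bform0r) subrr addr0.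
Qed.

Variable e : 'rV[R]_n.
Hypothesis e_central : central br e.

Let br_el z : br e z = 0. Proof. exact: e_central. Qed.
Let br_er z : br z e = 0. Proof. exact: central_brl. Qed.

Lemma lc_central_skew y z : g (p e y) z = - g y (p e z).
Proof.
rewrite [g y _]bformC //; apply: (mulfI two_neq0).
rewrite mulrN !p_lc !br_el !br_er (lie_brC br_lie y z).
by rewrite !(bform0l, bformNl) !add0r !addr0 opprK.
Qed.

Lemma lc_central_self : p e e = 0.
Proof. by apply: lc_eq0 => z; rewrite !br_el !br_er !bform0l subrr addr0. Qed.

Lemma lc_centralC z : p e z = p z e.
Proof.
apply/eqP; rewrite -subr_eq0; apply/eqP; apply: (bform_nondeg G_unit) => w.
apply: (mulfI two_neq0); rewrite mulr0 bformBl mulrBr !p_lc !br_el !br_er.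
by rewrite (lie_brC br_lie w z) !(bform0l, bformNl) sub0r opprK addr0 subrr add0r subrr.
Qed.

Lemma lc_central_alt y : g y (p e y) = 0.
Proof.
have gN : g y (p e y) = - g y (p e y) by rewrite -{1}bformC // lc_central_skew.
have : g y (p e y) *+ 2 == 0 by rewrite mulr2n {1}gN addNr.
by rewrite mulrn_eq0 => /eqP.
Qed.

Lemma lc_central_orth : (forall x, p e x = 0) -> forall y z, g (br y z) e = 0.
Proof.
move=> Le0 y z; have := p_lc e y z.
rewrite Le0 bform0l mulr0 br_el (lie_brC br_lie e z) br_el oppr0 !bform0l add0r addr0.
by move=> /eqP; rewrite eq_sym oppr_eq0 => /eqP.
Qed.

Section Flat.
Hypothesis p_flat : flat br p.

Lemma flat_central_sqr x : p e (p e x) = 0.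
Proof.
by rewrite [p e x]lc_centralC; have := p_flat e x e; rewrite lc_central_self br_el lc0l lc0r !subr0.
Qed.

Lemma flat_central_isotropic y z : g (p e y) (p e z) = 0.
Proof. by rewrite lc_central_skew flat_central_sqr bform0r oppr0. Qed.

Lemma riemannian_flat_central x : riemannian G -> p e x = 0.
Proof.
move=> G_pos; have [//|Lex_neq0] := eqVneq (p e x) 0.
by have := G_pos _ Lex_neq0; rewrite flat_central_isotropic ltxx.
Qed.

Lemma lorentzian_flat_central x : lorentzian G -> p e x = 0.
Proof.
move=> G_lor; apply: (bform_nondeg G_unit) => w.
have [->|[c Lew]] := lorentzian_isotropic_collinear G_lor (flat_central_isotropic x x)
  (flat_central_isotropic w w) (flat_central_isotropic x w) (flat_central_isotropic w x).
  by rewrite bform0l.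
by rewrite lc_central_skew Lew bformZr lc_central_alt mulr0 oppr0.
Qed.

End Flat.
End LeviCivita.

Theorem mainTheorem11 (R : rcfType) (n : nat)
  (br : 'rV[R]_n -> 'rV[R]_n -> 'rV[R]_n) (K U : 'M[R]_n)
  (p : 'rV[R]_n -> 'rV[R]_n -> 'rV[R]_n) :
  quadratic br K ->
  U \in unitmx -> k_symmetric K U ->
  levi_civita br (bform (U *m K)) p ->
  flat br p ->
  (forall e, central br e -> forall x, p e (p e x) = 0) /\
  (riemannian (U *m K) \/ lorentzian (U *m K) ->
     (forall e, central br e -> forall x, p e x = 0) /\
     (forall e, central br e -> central br (e *m U))).
Proof.
move=> K_quad U_unit U_sym p_lc p_flat.
have [br_lie [K_sym [K_unit _]]] := K_quad.
have UK_sym : (U *m K)^T = U *m K.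
  apply: bform_inj => x y.
  by rewrite bform_trmx !bform_mulmxl bformC // U_sym.
have UK_unit : U *m K \in unitmx by rewrite unitmx_mul U_unit K_unit.
split=> [e e_central|signature]; first exact: (flat_central_sqr br_lie UK_unit p_lc).
have Le0 e : central br e -> forall x, p e x = 0.
  move=> e_central x; case: signature => [UK_pos|UK_lor].
    exact: (riemannian_flat_central br_lie UK_sym UK_unit p_lc).
  exact: (lorentzian_flat_central br_lie UK_sym UK_unit p_lc).
split=> // e e_central; apply: (quadratic_orth_central K_quad) => y z.
rewrite -U_sym -bform_mulmxl.
exact: (lc_central_orth br_lie p_lc e_central (Le0 e e_central)).
Qed.
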